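(* Over the theory $\mathrm{IKP}-\Delta_0\text{ Bounding}$ (i.e. IKP with the $\Delta_0$ Bounding schema removed), the following three axiom schemes are equivalent: (1) $\Pi$ Persistence; (2) $\Pi$ Uniformity; (3) $\Delta_0$ Uniformity.
   Context: All theories are over intuitionistic first-order logic in the language $\{\in,=\}$. IKP has the axioms: Extensionality, Empty Set, Pairing, Union, Infinity in the form $\exists x\,[0\in x\wedge\forall y\in x\,\exists z\in x\,(z=y\cup\{y\})\wedge\forall y\in x\,(y=0\vee\exists z\in x\; y=z\cup\{z\})]$, the $\in$-Induction schema $\forall x(\forall y\in x\,\phi(y)\to\phi(x))\to\forall x\,\phi(x)$ for all formulas $\phi$, $\Delta_0$ Separation, and $\Delta_0$ Bounding: $\forall x\in A\,\exists y\,\phi(x,y)\to\exists B\,\forall x\in A\,\exists y\in B\,\phi(x,y)$ for $\Delta_0$ $\phi$ (parameters allowed). A $\Delta_0$ formula has only bounded quantifiers. $\Pi$ formulas are the closure of the $\Delta_0$ formulas under $\wedge,\vee$, unbounded $\forall$, and bounded quantifiers $\forall u\in v$, $\exists u\in v$. For a formula $\phi$ and a set $A$, $\phi^{(A)}$ is obtained by bounding every unbounded quantifier of $\phi$ by $A$. $\Pi$ Persistence: $\forall A\,\phi^{(A)}\to\phi$ for every $\Pi$ formula $\phi$. $\Pi$ Uniformity: $\forall B\,\exists x\in A\,\forall y\in B\,\phi(x,y)\to\exists x\in A\,\forall y\,\phi(x,y)$ for every $\Pi$ formula $\phi$ (parameters allowed). $\Delta_0$ Uniformity: the same schema restricted to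 $\Delta_0$ formulas $\phi$. *)

(* Bounded quantifiers are primitive syntax so that "unbounded quantifier"
   (needed for relativization and for the Δ0 / Π classes) is syntactic. *)
From Stdlib Require Import List.
Import ListNotations.

Inductive form : Type :=
| FMem : nat -> nat -> form          (* FMem i j : x_i ∈ x_j *)
| FEq  : nat -> nat -> form
| FBot : form
| FAnd : form -> form -> form
| FOr  : form -> form -> form
| FImp : form -> form -> form
| FAll : form -> form
| FEx  : form -> form
| FBAll : nat -> form -> form        (* FBAll v φ : ∀ x_0 ∈ v (v is outer index) *)
| FBEx  : nat -> form -> form.

Definition FIff (a b : form) : form := FAnd (FImp a b) (FImp b a).

Definition up (r : nat -> nat) (n : nat) : nat :=
  match n with 0 => 0 | S k => S (r k) end.

Fixpoint rename (r : nat -> nat) (f : form) : form :=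
  match f with
  | FMem i j => FMem (r i) (r j)
  | FEq i j => FEq (r i) (r j)
  | FBot => FBot
  | FAnd a b => FAnd (rename r a) (rename r b)
  | FOr a b => FOr (rename r a) (rename r b)
  | FImp a b => FImp (rename r a) (rename r b)
  | FAll a => FAll (rename (up r) a)
  | FEx a => FEx (rename (up r) a)
  | FBAll v a => FBAll (r v) (rename (up r) a)
  | FBEx v a => FBEx (r v) (rename (up r) a)
  end.

Definition shift (f : form) : form := rename S f.

Definition inst (y : nat) (f : form) : form :=
  rename (fun n => match n with 0 => y | S k => k end) f.

(* Intuitionistic natural deduction over a theory T (a set of formulas;
   free variables of axioms are implicitly universally quantified, so every
   renaming instance of an axiom may be used). Equality is logical. *)
Inductive Prov (T : form -> Prop) : list form -> form -> Prop :=
| P_hyp : forall G f, In f G -> Prov T G f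
| P_ax : forall G f r, T f -> Prov T G (rename r f)
| P_botE : forall G f, Prov T G FBot -> Prov T G f
| P_andI : forall G a b, Prov T G a -> Prov T G b -> Prov T G (FAnd a b)
| P_andE1 : forall G a b, Prov T G (FAnd a b) -> Prov T G a
| P_andE2 : forall G a b, Prov T G (FAnd a b) -> Prov T G b
| P_orI1 : forall G a b, Prov T G a -> Prov T G (FOr a b)
| P_orI2 : forall G a b, Prov T G b -> Prov T G (FOr a b)
| P_orE : forall G a b c, Prov T G (FOr a b) -> Prov T (a :: G) c ->
    Prov T (b :: G) c -> Prov T G c
| P_impI : forall G a b, Prov T (a :: G) b -> Prov T G (FImp a b)
| P_impE : forall G a b, Prov T G (FImp a b) -> Prov T G a -> Prov T G b
| P_allI : forall G a, Prov T (map shift G) a -> Prov T G (FAll a)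
| P_allE : forall G a y, Prov T G (FAll a) -> Prov T G (inst y a)
| P_exI : forall G a y, Prov T G (inst y a) -> Prov T G (FEx a)
| P_exE : forall G a c, Prov T G (FEx a) -> Prov T (a :: map shift G) (shift c) ->
    Prov T G c
| P_ballI : forall G v a, Prov T (FMem 0 (S v) :: map shift G) a -> Prov T G (FBAll v a)
| P_ballE : forall G v a y, Prov T G (FBAll v a) -> Prov T G (FMem y v) ->
    Prov T G (inst y a)
| P_bexI : forall G v a y, Prov T G (FMem y v) -> Prov T G (inst y a) ->
    Prov T G (FBEx v a)
| P_bexE : forall G v a c, Prov T G (FBEx v a) ->
    Prov T (a :: FMem 0 (S v) :: map shift G) (shift c) -> Prov T G c
| P_eqRefl : forall G x, Prov T G (FEq x x)
| P_eqE : forall G x y a, Prov T G (FEq x y) -> Prov T G (inst x a) ->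
    Prov T G (inst y a).

Inductive Delta0 : form -> Prop :=
| D0_mem : forall i j, Delta0 (FMem i j)
| D0_eq : forall i j, Delta0 (FEq i j)
| D0_bot : Delta0 FBot
| D0_and : forall a b, Delta0 a -> Delta0 b -> Delta0 (FAnd a b)
| D0_or : forall a b, Delta0 a -> Delta0 b -> Delta0 (FOr a b)
| D0_imp : forall a b, Delta0 a -> Delta0 b -> Delta0 (FImp a b)
| D0_ball : forall v a, Delta0 a -> Delta0 (FBAll v a)
| D0_bex : forall v a, Delta0 a -> Delta0 (FBEx v a).

Inductive PiF : form -> Prop :=
| Pi_d0 : forall a, Delta0 a -> PiF a
| Pi_and : forall a b, PiF a -> PiF b -> PiF (FAnd a b)
| Pi_or : forall a b, PiF a -> PiF b -> PiF (FOr a b)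
| Pi_all : forall a, PiF a -> PiF (FAll a)
| Pi_ball : forall v a, PiF a -> PiF (FBAll v a)
| Pi_bex : forall v a, PiF a -> PiF (FBEx v a).

Fixpoint rel (A : nat) (f : form) : form :=
  match f with
  | FMem i j => FMem i j
  | FEq i j => FEq i j
  | FBot => FBot
  | FAnd a b => FAnd (rel A a) (rel A b)
  | FOr a b => FOr (rel A a) (rel A b)
  | FImp a b => FImp (rel A a) (rel A b)
  | FAll a => FBAll A (rel (S A) a)
  | FEx a => FBEx A (rel (S A) a)
  | FBAll v a => FBAll v (rel (S A) a)
  | FBEx v a => FBEx v (rel (S A) a)
  end.

(* ∀a∀b [∀x (x∈a ↔ x∈b) → a = b] *)
Definition Ax_ext : form :=
  FAll (FAll (FImp (FAll (FIff (FMem 0 2) (FMem 0 1))) (FEq 1 0))).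

(* ∃x ∀y∈x ⊥ *)
Definition Ax_empty : form := FEx (FBAll 0 FBot).

(* ∀a∀b∃y (a∈y ∧ b∈y) *)
Definition Ax_pair : form := FAll (FAll (FEx (FAnd (FMem 2 0) (FMem 1 0)))).

(* ∀a∃y ∀x∈a ∀z∈x z∈y *)
Definition Ax_union : form := FAll (FEx (FBAll 1 (FBAll 0 (FMem 0 2)))).

Definition isEmpty (v : nat) : form := FBAll v FBot.
(* "x_z = x_y ∪ {x_y}" *)
Definition succOf (z y : nat) : form :=
  FAnd (FBAll z (FOr (FMem 0 (S y)) (FEq 0 (S y))))
       (FAnd (FBAll y (FMem 0 (S z))) (FMem y z)).

(* ∃x [0∈x ∧ ∀y∈x ∃z∈x (z = y∪{y}) ∧ ∀y∈x (y = 0 ∨ ∃z∈x y = z∪{z})] *)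
Definition Ax_inf : form :=
  FEx (FAnd (FBEx 0 (isEmpty 0))
      (FAnd (FBAll 0 (FBEx 1 (succOf 0 1)))
            (FBAll 0 (FOr (isEmpty 0) (FBEx 1 (succOf 1 0)))))).

(* ∈-Induction instance for φ (x_0 = induction variable, others parameters):
   ∀x(∀y∈x φ(y) → φ(x)) → ∀x φ(x) *)
Definition Ax_ind (p : form) : form :=
  FImp (FAll (FImp (FBAll 0 (rename (up S) p)) p)) (FAll p).

(* Δ0 Separation instance (x_0 = separated variable, others parameters):
   ∀a∃y∀x (x∈y ↔ x∈a ∧ φ(x)) *)
Definition Ax_sep (p : form) : form :=
  FAll (FEx (FAll (FIff (FMem 0 1)
     (FAnd (FMem 0 2) (rename (up (fun n => S (S n))) p))))).

Inductive IKP_minus_Bounding : form -> Prop :=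
| T_ext : IKP_minus_Bounding Ax_ext
| T_empty : IKP_minus_Bounding Ax_empty
| T_pair : IKP_minus_Bounding Ax_pair
| T_union : IKP_minus_Bounding Ax_union
| T_inf : IKP_minus_Bounding Ax_inf
| T_ind : forall p, IKP_minus_Bounding (Ax_ind p)
| T_sep : forall p, Delta0 p -> IKP_minus_Bounding (Ax_sep p).

(* Π Persistence: ∀A φ^(A) → φ, φ ∈ Π (free variables of φ are parameters) *)
Inductive PiPersistence : form -> Prop :=
| PP : forall p, PiF p -> PiPersistence (FImp (FAll (rel 0 (shift p))) p).

(* Uniformity instance for φ(x,y) with y = x_0, x = x_1, parameters x_{k+2}
   (= outer x_k), and A = outer variable x_a:
   ∀B ∃x∈A ∀y∈B φ(x,y) → ∃x∈A ∀y φ(x,y) *)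
Definition skipB (n : nat) : nat :=
  match n with 0 => 0 | 1 => 1 | S (S k) => S (S (S k)) end.

Definition Unif (a : nat) (p : form) : form :=
  FImp (FAll (FBEx (S a) (FBAll 1 (rename skipB p))))
       (FBEx a (FAll p)).

Inductive PiUniformity : form -> Prop :=
| PU : forall a p, PiF p -> PiUniformity (Unif a p).

Inductive D0Uniformity : form -> Prop :=
| DU : forall a p, Delta0 p -> D0Uniformity (Unif a p).

Definition Union (T S : form -> Prop) : form -> Prop := fun f => T f \/ S f.

Definition ProvesScheme (T S : form -> Prop) : Prop :=
  forall f, S f -> Prov T [] f.

(* Π Persistence gives Π Uniformity: Π formulas are upward absolute, so the hypothesis
   of uniformity says that [∃x∈A ∀y φ] holds relativized to every set, and persistence
   removes the relativization.  Conversely Δ0 Uniformity gives Π Persistence by induction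
   on the Π formula, using that relativizations of Π formulas shrink along ⊆.  For [∀x φ],
   relativize to a set containing both the given bound and [x].  For [∃x∈v φ], apply Δ0
   uniformity to [φ^(y)(x)], choosing for each [B] a witness that works for [⋃B].  For
   [φ ∨ ψ], apply it to "[x = ∅ ∧ φ^(y)] or [x inhabited ∧ ψ^(y)]" with [x] ranging
   over a set containing [∅] and [{∅}]: the uniform witness decides the disjunction. *)

From Stdlib Require Import List.
Import ListNotations.

(** * Renaming and relativization *)

Lemma rename_ext r s f : (forall n, r n = s n) -> rename r f = rename s f.
Proof.
  revert r s; induction f; intros r s H; simpl; f_equal; auto;
  apply IHf || apply IHf1 || apply IHf2; intros [|k]; simpl; f_equal; auto.
Qed.

Lemma rename_comp r s f : rename r (rename s f) = rename (fun n => r (s n)) f.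
Proof.
  revert r s; induction f; intros r s; simpl; f_equal; auto;
  rewrite ?IHf; apply rename_ext; intros [|k]; reflexivity.
Qed.

Lemma rename_id f : rename (fun n => n) f = f.
Proof.
  induction f; simpl; f_equal; auto;
  rewrite <- IHf at 2; apply rename_ext; intros [|k]; reflexivity.
Qed.

Lemma rename_inst r y a : rename r (inst y a) = inst (r y) (rename (up r) a).
Proof. unfold inst; rewrite !rename_comp; apply rename_ext; intros [|k]; reflexivity. Qed.

Lemma rename_up_shift r c : rename (up r) (shift c) = shift (rename r c).
Proof. unfold shift; rewrite !rename_comp; apply rename_ext; intros [|k]; reflexivity. Qed.

Lemma map_rename_up_shift r G :
  map (rename (up r)) (map shift G) = map shift (map (rename r) G).
Proof. rewrite !map_map; apply map_ext; intro; apply rename_up_shift. Qed.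

Lemma inst_shift y a : inst y (shift a) = a.
Proof.
  unfold inst, shift; rewrite rename_comp; rewrite <- (rename_id a) at 2.
  apply rename_ext; intros [|k]; reflexivity.
Qed.

Lemma inst0_rename_upS a : inst 0 (rename (up S) a) = a.
Proof.
  unfold inst; rewrite rename_comp; rewrite <- (rename_id a) at 2.
  apply rename_ext; intros [|k]; reflexivity.
Qed.

Lemma rename_rel r A f : rename r (rel A f) = rel (r A) (rename r f).
Proof.
  revert r A; induction f; intros r A; simpl; f_equal;
  rewrite ?IHf, ?IHf1, ?IHf2; reflexivity.
Qed.

Lemma rel_Delta0 f : Delta0 f -> forall A, rel A f = f.
Proof. induction 1; intros A; simpl; f_equal; auto. Qed.

Lemma Delta0_rel f : forall A, Delta0 (rel A f).
Proof. induction f; intros A; simpl; constructor; auto. Qed.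

Lemma Delta0_rename f : Delta0 f -> forall r, Delta0 (rename r f).
Proof. induction 1; intros r; simpl; constructor; auto. Qed.

Lemma PiF_rename p : PiF p -> forall r, PiF (rename r p).
Proof.
  induction 1; intros r; simpl; try (constructor; auto; fail).
  apply Pi_d0, Delta0_rename; auto.
Qed.

Ltac in_list := first [left; reflexivity | right; in_list].
Ltac hyp := apply P_hyp; simpl; in_list.

Section Derivations.

Variable T : form -> Prop.

Lemma Prov_rename G f : Prov T G f -> forall s, Prov T (map (rename s) G) (rename s f).
Proof.
  induction 1; intro s; simpl in *.
  - apply P_hyp; apply in_map; auto.
  - rewrite rename_comp; apply P_ax; auto.
  - apply P_botE; auto.
  - apply P_andI; auto.
  - eapply P_andE1; eauto.
  - eapply P_andE2; eauto.
  - apply P_orI1; auto.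
  - apply P_orI2; auto.
  - eapply P_orE; eauto.
  - apply P_impI; auto.
  - eapply P_impE; eauto.
  - apply P_allI; rewrite <- map_rename_up_shift; auto.
  - rewrite rename_inst; apply P_allE; auto.
  - apply P_exI with (s y); rewrite <- rename_inst; auto.
  - eapply P_exE; [apply IHProv1|].
    rewrite <- map_rename_up_shift, <- rename_up_shift; apply (IHProv2 (up s)).
  - apply P_ballI; rewrite <- map_rename_up_shift; apply (IHProv (up s)).
  - rewrite rename_inst; eapply P_ballE; [apply (IHProv1 s)|apply (IHProv2 s)].
  - apply P_bexI with (s y); [apply (IHProv1 s)|]; rewrite <- rename_inst; auto.
  - eapply P_bexE; [apply IHProv1|].
    rewrite <- map_rename_up_shift, <- rename_up_shift; apply (IHProv2 (up s)).
  - apply P_eqRefl.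
  - rewrite rename_inst; eapply P_eqE; [apply (IHProv1 s)|].
    rewrite <- rename_inst; auto.
Qed.

Lemma incl_cons_cons {A} (a : A) l l' : incl l l' -> incl (a :: l) (a :: l').
Proof. intros H x [->|Hx]; [left|right]; auto. Qed.

Lemma Prov_weaken G f : Prov T G f -> forall G', incl G G' -> Prov T G' f.
Proof.
  induction 1; intros G' HG.
  - apply P_hyp; auto.
  - apply P_ax; auto.
  - apply P_botE; auto.
  - apply P_andI; auto.
  - eapply P_andE1; eauto.
  - eapply P_andE2; eauto.
  - apply P_orI1; auto.
  - apply P_orI2; auto.
  - eapply P_orE; eauto using incl_cons_cons.
  - apply P_impI; eauto using incl_cons_cons.
  - eapply P_impE; eauto.
  - apply P_allI; apply IHProv, incl_map; auto.
  - apply P_allE; auto.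
  - eapply P_exI; eauto.
  - eapply P_exE; eauto. apply IHProv2, incl_cons_cons, incl_map; auto.
  - apply P_ballI; apply IHProv, incl_cons_cons, incl_map; auto.
  - eapply P_ballE; eauto.
  - eapply P_bexI; eauto.
  - eapply P_bexE; eauto. apply IHProv2, incl_cons_cons, incl_cons_cons, incl_map; auto.
  - apply P_eqRefl.
  - eapply P_eqE; eauto.
Qed.

Lemma Prov_eq G X Y : Prov T G X -> X = Y -> Prov T G Y.
Proof. intros H ->; exact H. Qed.

Lemma Prov_cut G a b : Prov T G a -> Prov T (a :: G) b -> Prov T G b.
Proof. intros Ha Hb; eapply P_impE; [apply P_impI|]; eassumption. Qed.

Lemma Prov_axiom G f : T f -> Prov T G f.
Proof. intro H; rewrite <- (rename_id f); apply P_ax; auto. Qed.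

Lemma Prov_shift G f : Prov T G f -> Prov T (map shift G) (shift f).
Proof. intro H; exact (Prov_rename G f H S). Qed.

Lemma Prov_shift_app L G f : Prov T G f -> Prov T (L ++ map shift G) (shift f).
Proof.
  intro H; eapply Prov_weaken; [apply Prov_shift, H|].
  intros x Hx; apply in_or_app; auto.
Qed.

Lemma Prov_allE_shift G a : Prov T G (FAll a) -> Prov T (map shift G) a.
Proof. intro H; rewrite <- (inst0_rename_upS a); apply P_allE; exact (Prov_shift _ _ H). Qed.

Lemma Prov_ballE_shift G v a :
  Prov T G (FBAll v a) -> Prov T (FMem 0 (S v) :: map shift G) a.
Proof.
  intro H; rewrite <- (inst0_rename_upS a).
  eapply P_ballE; [exact (Prov_shift_app [_] _ _ H)|apply P_hyp; left; reflexivity].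
Qed.

Lemma Prov_ball_mono G v a b : Prov T G (FBAll v a) ->
  (forall G', Prov T G' a -> Prov T G' b) -> Prov T G (FBAll v b).
Proof. intros H Hab; apply P_ballI, Hab, Prov_ballE_shift, H. Qed.

Lemma Prov_bex_mono G v a b : Prov T G (FBEx v a) ->
  (forall G', Prov T G' a -> Prov T G' b) -> Prov T G (FBEx v b).
Proof.
  intros H Hab; eapply P_bexE; [exact H|]; simpl.
  apply P_bexI with 0; [apply P_hyp; right; left; reflexivity|].
  rewrite inst0_rename_upS; apply Hab, P_hyp; left; reflexivity.
Qed.

Lemma Prov_all_andE1 G a b : Prov T G (FAll (FAnd a b)) -> Prov T G (FAll a).
Proof. intro H; apply P_allI; eapply P_andE1; apply Prov_allE_shift, H. Qed.

Lemma Prov_all_andE2 G a b : Prov T G (FAll (FAnd a b)) -> Prov T G (FAll b).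
Proof. intro H; apply P_allI; eapply P_andE2; apply Prov_allE_shift, H. Qed.

Lemma Prov_rel_of_PiF p : PiF p -> forall G C, Prov T G p -> Prov T G (rel C p).
Proof.
  induction 1 as [a Ha|a b Ha IHa Hb IHb|a b Ha IHa Hb IHb|a Ha IHa|v a Ha IHa|v a Ha IHa];
    intros G C H; simpl.
  - rewrite rel_Delta0; auto.
  - apply P_andI; [apply IHa; eapply P_andE1|apply IHb; eapply P_andE2]; eauto.
  - eapply P_orE; [exact H|apply P_orI1, IHa|apply P_orI2, IHb]; apply P_hyp; left; auto.
  - apply P_ballI, IHa.
    eapply Prov_weaken; [apply Prov_allE_shift, H|]; intros x Hx; right; auto.
  - apply P_ballI, IHa, Prov_ballE_shift, H.
  - eapply Prov_bex_mono; [exact H|]; auto.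
Qed.

(* [FBAll C (FMem 0 (S D))] says [x_C ⊆ x_D]. *)
Lemma Prov_rel_PiF_subset p : PiF p -> forall G C D,
  Prov T G (rel D p) -> Prov T G (FBAll C (FMem 0 (S D))) -> Prov T G (rel C p).
Proof.
  induction 1 as [a Ha|a b Ha IHa Hb IHb|a b Ha IHa Hb IHb|a Ha IHa|v a Ha IHa|v a Ha IHa];
    intros G C D H Hsub; simpl in *.
  - rewrite rel_Delta0 in *; auto.
  - apply P_andI; [eapply IHa; [eapply P_andE1|]|eapply IHb; [eapply P_andE2|]]; eauto.
  - eapply P_orE; [exact H|apply P_orI1; eapply IHa|apply P_orI2; eapply IHb];
      try (apply P_hyp; left; reflexivity);
      eapply Prov_weaken; try exact Hsub; intros x Hx; right; auto.
  - apply P_ballI; apply IHa with (D := S D).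
    + rewrite <- (inst0_rename_upS (rel (S D) a)).
      eapply P_ballE; [exact (Prov_shift_app [_] _ _ H)|apply Prov_ballE_shift, Hsub].
    + exact (Prov_shift_app [_] _ _ Hsub).
  - apply P_ballI; apply IHa with (D := S D).
    + apply Prov_ballE_shift, H.
    + exact (Prov_shift_app [_] _ _ Hsub).
  - eapply P_bexE; [exact H|]; simpl.
    apply P_bexI with 0; [apply P_hyp; right; left; reflexivity|].
    rewrite inst0_rename_upS; apply IHa with (D := S D); [apply P_hyp; left; auto|].
    exact (Prov_shift_app [_; _] _ _ Hsub).
Qed.

End Derivations.

Lemma PiUniformity_of_PiPersistence T :
  (forall f, PiPersistence f -> Prov T [] f) -> forall f, PiUniformity f -> Prov T [] f.
Proof.
  intros HP f [a p Hp]; unfold Unif; apply P_impI.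
  eapply P_impE.
  { eapply Prov_weaken; [apply HP; constructor; do 2 constructor; exact Hp|].
    intros x []. }
  apply P_allI; simpl.
  eapply Prov_bex_mono; [exact (Prov_allE_shift _ [_] _ (P_hyp _ _ _ (in_eq _ _)))|].
  intros G H; eapply Prov_ball_mono; [exact H|]; intros G' H'.
  replace (rename (up (up S)) p) with (rename skipB p)
    by (apply rename_ext; intros [|[|k]]; reflexivity).
  apply Prov_rel_of_PiF, H'; apply PiF_rename, Hp.
Qed.

(** * Set existence without Δ0 Bounding *)

Local Notation shift3 f := (shift (shift (shift f))).

Section SetExistence.

Variable T : form -> Prop.
Hypothesis T_IKP : forall f, IKP_minus_Bounding f -> T f.

(* Each [_elim] rule introduces a fresh set [x_0] with the displayed properties. *)
Lemma union_elim G b c :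
  Prov T (FBAll (S b) (FBAll 0 (FMem 0 2)) :: map shift G) (shift c) -> Prov T G c.
Proof.
  apply P_exE; exact (P_allE _ _ _ b (Prov_axiom T G _ (T_IKP _ T_union))).
Qed.

Lemma pair_elim G u v c :
  Prov T (FAnd (FMem (S u) 0) (FMem (S v) 0) :: map shift G) (shift c) -> Prov T G c.
Proof.
  apply P_exE.
  exact (P_allE _ _ _ v (P_allE _ _ _ u (Prov_axiom T G _ (T_IKP _ T_pair)))).
Qed.

Lemma empty_elim G c : Prov T (FBAll 0 FBot :: map shift G) (shift c) -> Prov T G c.
Proof. apply P_exE, Prov_axiom, T_IKP, T_empty. Qed.

Lemma superset_elim G u v c :
  Prov T (FBAll (S u) (FMem 0 1) :: FMem (S v) 0 :: map shift G) (shift c) -> Prov T G c.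
Proof.
  intro H.
  (* the witness is [⋃ {x_u, {x_v}}] *)
  apply (pair_elim G v v); simpl.
  apply (pair_elim _ (S u) 0); simpl.
  apply (union_elim _ 0); simpl.
  eapply Prov_cut with (a := FMem (S (S (S v))) 0).
  { apply (P_ballE _ _ 2 (FMem 0 1) (S (S (S v)))).
    - apply (P_ballE _ _ 1 (FBAll 0 (FMem 0 2)) 2); [hyp|eapply P_andE2; hyp].
    - eapply P_andE1; hyp. }
  eapply Prov_cut with (a := FBAll (S (S (S u))) (FMem 0 1)).
  { apply P_ballI.
    apply (P_ballE _ _ (S (S (S (S u)))) (FMem 0 2) 0); [|hyp].
    apply (P_ballE _ _ 2 (FBAll 0 (FMem 0 3)) (S (S (S (S u))))); [hyp|eapply P_andE1; hyp]. }
  apply Prov_rename with (s := up (fun n => S (S n))) in H; simpl in H.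
  rewrite map_rename_up_shift, rename_up_shift in H.
  replace (map (rename (fun n => S (S n))) G) with (map shift (map shift G)) in H
    by (rewrite map_map; apply map_ext; intro; apply rename_comp).
  replace (rename (fun n => S (S n)) c) with (shift (shift c)) in H by apply rename_comp.
  eapply Prov_weaken; [exact H|].
  intros x [<-|[<-|Hx]]; simpl; auto 7.
Qed.

(* [x_2 = ∅], [x_1 ∋ ∅] and [x_0 ⊇ {x_1, x_2}]: two distinguishable elements of a set *)
Lemma zero_one_elim G c :
  Prov T (FMem 2 0 :: FMem 1 0 :: FBAll 2 FBot :: FMem 2 1 ::
          map shift (map shift (map shift G))) (shift3 c) ->
  Prov T G c.
Proof.
  intro H.
  apply (empty_elim G); apply (pair_elim _ 0 0); apply (pair_elim _ 1 0).
  eapply Prov_cut with (a := FMem 2 1); [eapply P_andE1; hyp|].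
  eapply Prov_cut with (a := FBAll 2 FBot); [hyp|].
  eapply Prov_cut with (a := FMem 1 0); [eapply P_andE2; hyp|].
  eapply Prov_cut with (a := FMem 2 0); [eapply P_andE1; hyp|].
  eapply Prov_weaken; [exact H|]; intros x Hx; simpl in *; tauto.
Qed.

End SetExistence.

(** * Δ0 Uniformity implies Π Persistence *)

Ltac norm_rename := repeat progress (rewrite ?rename_comp, ?rename_rel; cbn [rename rel up skipB]).

(* [norm_goal] and [norm_in] normalize the formula but leave the context untouched. *)
Ltac norm_goal := match goal with |- Prov _ ?G _ =>
  let ctx := fresh "ctx" in remember G as ctx eqn:Hctx;
  unfold inst, shift; norm_rename; subst ctx end.

Ltac norm_in H := match type of H with Prov _ ?G _ =>
  let ctx := fresh "ctx" in remember G as ctx eqn:Hctx in H;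
  unfold inst, shift in H;
  repeat progress (rewrite ?rename_comp, ?rename_rel in H; cbn [rename rel up skipB] in H);
  subst ctx end.

(* equality of two renamings of one formula, up to extensionality of the renamings *)
Ltac form_eq := unfold inst, shift; norm_rename;
  repeat (first [reflexivity |
                 apply rename_ext; intros [|[|[|[|[|[|k]]]]]]; reflexivity | f_equal]).

Section Persistence.

Variable T : form -> Prop.
Hypothesis T_IKP : forall f, IKP_minus_Bounding f -> T f.
Hypothesis T_D0Unif : forall a p, Delta0 p -> T (Unif a p).

Lemma D0Uniformity_elim G a p : Delta0 p ->
  Prov T G (FAll (FBEx (S a) (FBAll 1 (rename skipB p)))) -> Prov T G (FBEx a (FAll p)).
Proof. intro Hp; apply P_impE, Prov_axiom, T_D0Unif, Hp. Qed.

Definition persists p : Prop := forall G, Prov T G (FAll (rel 0 (shift p))) -> Prov T G p.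

Lemma persists_all a : PiF a -> persists a -> persists (FAll a).
Proof.
  intros Ha IHa G H; apply P_allI, IHa, P_allI.
  apply (superset_elim T T_IKP _ 0 1).
  pose proof (Prov_shift_app T [FBAll 1 (FMem 0 1); FMem 2 0] _ _
                (Prov_shift _ _ _ (Prov_shift _ _ _ H))) as H3.
  apply P_allE with (y := 0) in H3; norm_in H3.
  apply P_ballE with (y := 2) in H3; [|hyp].
  norm_goal; eapply Prov_rel_PiF_subset with (D := 0); [apply PiF_rename, Ha| |hyp].
  eapply Prov_eq; [exact H3|]; form_eq.
Qed.

Lemma persists_ball v a : persists a -> persists (FBAll v a).
Proof.
  intros IHa G H; apply P_ballI, IHa, P_allI.
  pose proof (Prov_shift_app T [shift (FMem 0 (S v))] _ _ (Prov_shift _ _ _ H)) as H2.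
  apply P_allE with (y := 0) in H2; norm_in H2.
  apply P_ballE with (y := 1) in H2; [|hyp].
  eapply Prov_eq; [exact H2|]; form_eq.
Qed.

Lemma persists_bex v a : PiF a -> persists a -> persists (FBEx v a).
Proof.
  intros Ha IHa G H.
  eapply Prov_bex_mono; [|exact IHa].
  apply D0Uniformity_elim; [apply Delta0_rel|].
  apply P_allI, (union_elim T T_IKP _ 0).
  pose proof (Prov_shift_app T [FBAll 1 (FBAll 0 (FMem 0 2))] _ _ (Prov_shift _ _ _ H)) as H2.
  apply P_allE with (y := 0) in H2; norm_in H2.
  eapply P_bexE; [exact H2|]; simpl.
  apply P_bexI with 0; [hyp|].
  unfold inst; simpl; apply P_ballI; norm_goal.
  eapply Prov_rel_PiF_subset with (D := 2); [apply PiF_rename, Ha| |].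
  - eapply Prov_eq; [apply P_hyp, in_cons, in_eq|]; form_eq.
  - eapply (P_ballE _ _ 3 (FBAll 0 (FMem 0 4)) 0); hyp.
Qed.

(* [(x = ∅ ∧ a^(y)) ∨ (x inhabited ∧ b^(y))] with [x = x_1], [y = x_0] *)
Definition or_selector a b : form :=
  FOr (FAnd (FBAll 1 FBot) (rel 0 (rename (fun n => S (S n)) a)))
      (FAnd (FBEx 1 (FEq 0 0)) (rel 0 (rename (fun n => S (S n)) b))).

Lemma empty_not_inhabited G v :
  Prov T G (FBAll v FBot) -> Prov T G (FBEx v (FEq 0 0)) -> Prov T G FBot.
Proof.
  intros Hempty Hinh; eapply P_bexE; [exact Hinh|].
  exact (P_ballE _ _ _ _ 0 (Prov_shift_app T [FEq 0 0; _] _ _ Hempty) ltac:(hyp)).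
Qed.

Lemma or_selector_empty G a b : Prov T G (FAll (or_selector a b)) ->
  Prov T G (FBAll 0 FBot) -> Prov T G (FAll (rel 0 (shift (rename S a)))).
Proof.
  intros Hsel Hx; apply P_allI.
  eapply P_orE; [exact (Prov_allE_shift _ _ _ Hsel)| |].
  - eapply Prov_eq; [eapply P_andE2; hyp|]; form_eq.
  - apply P_botE, (empty_not_inhabited _ 1); [exact (Prov_shift_app T [_] _ _ Hx)|].
    eapply P_andE1; hyp.
Qed.

Lemma or_selector_inhabited G a b : Prov T G (FAll (or_selector a b)) ->
  Prov T G (FBEx 0 (FEq 0 0)) -> Prov T G (FAll (rel 0 (shift (rename S b)))).
Proof.
  intros Hsel Hx; apply P_allI.
  eapply P_orE; [exact (Prov_allE_shift _ _ _ Hsel)| |].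
  - apply P_botE, (empty_not_inhabited _ 1); [eapply P_andE1; hyp|].
    exact (Prov_shift_app T [_] _ _ Hx).
  - eapply Prov_eq; [eapply P_andE2; hyp|]; form_eq.
Qed.

(* For a given [B] the witness is [∅ = x_2] or [x_1 ∋ ∅], according as [a] or [b] holds
   relativized to [⋃ B]. *)
Lemma or_selector_cover G a b : PiF a -> PiF b ->
  Prov T (FMem 2 0 :: FMem 1 0 :: FBAll 2 FBot :: FMem 2 1 :: G)
    (FAll (rel 0 (shift (FOr a b)))) ->
  Prov T (FMem 2 0 :: FMem 1 0 :: FBAll 2 FBot :: FMem 2 1 :: G)
    (FAll (FBEx 1 (FBAll 1 (rename skipB (or_selector a b))))).
Proof.
  intros Ha Hb H; apply P_allI, (union_elim T T_IKP _ 0).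
  pose proof (Prov_shift_app T [FBAll 1 (FBAll 0 (FMem 0 2))] _ _ (Prov_shift _ _ _ H)) as H2.
  apply P_allE with (y := 0) in H2; norm_in H2.
  eapply P_orE; [exact H2| |]; simpl.
  - apply P_bexI with 4; [hyp|].
    unfold inst; simpl; apply P_ballI; unfold or_selector; norm_goal.
    apply P_orI1, P_andI; [hyp|].
    eapply Prov_rel_PiF_subset with (D := 1); [apply PiF_rename, Ha| |].
    + eapply Prov_eq; [apply P_hyp, in_cons, in_eq|]; form_eq.
    + eapply (P_ballE _ _ 2 (FBAll 0 (FMem 0 3)) 0); hyp.
  - apply P_bexI with 3; [hyp|].
    unfold inst; simpl; apply P_ballI; unfold or_selector; norm_goal.
    apply P_orI2, P_andI; [apply P_bexI with 5; [hyp|apply P_eqRefl]|].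
    eapply Prov_rel_PiF_subset with (D := 1); [apply PiF_rename, Hb| |].
    + eapply Prov_eq; [apply P_hyp, in_cons, in_eq|]; form_eq.
    + eapply (P_ballE _ _ 2 (FBAll 0 (FMem 0 3)) 0); hyp.
Qed.

Lemma persists_or a b : PiF a -> PiF b ->
  (forall s, persists (rename s a)) -> (forall s, persists (rename s b)) ->
  persists (FOr a b).
Proof.
  intros Ha Hb IHa IHb G H; apply (zero_one_elim T T_IKP G).
  eapply P_bexE with (v := 0) (a := FAll (or_selector (shift3 a) (shift3 b))).
  { apply D0Uniformity_elim; [repeat constructor; apply Delta0_rel|].
    apply or_selector_cover; [do 3 apply PiF_rename; exact Ha|do 3 apply PiF_rename; exact Hb|].
    eapply Prov_eq; [exact (Prov_shift_app T [_; _; _; _] _ _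
                             (Prov_shift _ _ _ (Prov_shift _ _ _ H)))|form_eq]. }
  eapply P_orE; [exact (P_allE _ _ _ 0 (P_hyp _ _ _ (in_eq _ _)))| |].
  - apply P_orI1; eapply Prov_eq; [apply (IHa (fun n => S (S (S (S n)))))|form_eq].
    eapply Prov_eq; [apply (or_selector_empty _ (shift3 a) (shift3 b));
                       [hyp|eapply P_andE1; hyp]|form_eq].
  - apply P_orI2; eapply Prov_eq; [apply (IHb (fun n => S (S (S (S n)))))|form_eq].
    eapply Prov_eq; [apply (or_selector_inhabited _ (shift3 a) (shift3 b));
                       [hyp|eapply P_andE1; hyp]|form_eq].
Qed.

Lemma persists_PiF p : PiF p -> forall s, persists (rename s p).
Proof.
  induction 1 as [a Ha|a b Ha IHa Hb IHb|a b Ha IHa Hb IHb|a Ha IHa|v a Ha IHa|v a Ha IHa];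
    intros s; cbn [rename].
  - intros G H; rewrite rel_Delta0 in H by (apply Delta0_rename, Delta0_rename, Ha).
    rewrite <- (inst_shift 0 (rename s a)); apply P_allE, H.
  - intros G H; apply P_andI; [apply IHa; eapply Prov_all_andE1|apply IHb; eapply Prov_all_andE2];
      exact H.
  - apply persists_or; try apply PiF_rename; auto;
      intros r; rewrite rename_comp; auto.
  - apply persists_all; [apply PiF_rename, Ha|apply IHa].
  - apply persists_ball, IHa.
  - apply persists_bex; [apply PiF_rename, Ha|apply IHa].
Qed.

Lemma PiPersistence_of_D0Uniformity f : PiPersistence f -> Prov T [] f.
Proof.
  intros [p Hp]; apply P_impI.
  pose proof (persists_PiF p Hp (fun n => n)) as Hpers; rewrite rename_id in Hpers.
  apply Hpers; hyp.
Qed.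

End Persistence.

Lemma D0Uniformity_of_PiUniformity T :
  (forall f, PiUniformity f -> Prov T [] f) -> forall f, D0Uniformity f -> Prov T [] f.
Proof. intros HU f [a p Hp]; apply HU; do 2 constructor; exact Hp. Qed.

Theorem mainTheorem1 :
  ProvesScheme (Union IKP_minus_Bounding PiPersistence) PiUniformity /\
  ProvesScheme (Union IKP_minus_Bounding PiPersistence) D0Uniformity /\
  ProvesScheme (Union IKP_minus_Bounding PiUniformity) PiPersistence /\
  ProvesScheme (Union IKP_minus_Bounding PiUniformity) D0Uniformity /\
  ProvesScheme (Union IKP_minus_Bounding D0Uniformity) PiPersistence /\
  ProvesScheme (Union IKP_minus_Bounding D0Uniformity) PiUniformity.
Proof.
  unfold ProvesScheme.
  assert (Pers_Unif : forall f, PiUniformity f ->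
                        Prov (Union IKP_minus_Bounding PiPersistence) [] f).
  { apply PiUniformity_of_PiPersistence; intros f Hf; apply Prov_axiom; right; exact Hf. }
  assert (D0Unif_Pers : forall f, PiPersistence f ->
                          Prov (Union IKP_minus_Bounding D0Uniformity) [] f).
  { apply PiPersistence_of_D0Uniformity; [left|right; constructor]; assumption. }
  repeat split.
  - exact Pers_Unif.
  - apply D0Uniformity_of_PiUniformity, Pers_Unif.
  - apply PiPersistence_of_D0Uniformity; [left|right; do 2 constructor]; assumption.
  - apply D0Uniformity_of_PiUniformity; intros f Hf; apply Prov_axiom; right; exact Hf.
  - exact D0Unif_Pers.
  - apply PiUniformity_of_PiPersistence, D0Unif_Pers.
Qed.
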